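(* For arbitrary quasi-copulas $A$ and $B$ on $[0,1]^2$, the pairs $(A,A_M)$ and $(B_O,B)$ are imprecise copulas. The same holds in the discrete setting for discrete quasi-copulas on a mesh, with defects computed using rectangles with corners in the mesh.
   Context: A quasi-copula is $Q:[0,1]^2\to\mathbb{R}$ grounded ($Q(x,0)=Q(0,y)=0$), with neutral element $1$ ($Q(x,1)=x$, $Q(1,y)=y$), and with $V_Q(R)\ge0$ for each rectangle having a side on the boundary of $[0,1]^2$, where $V_Q([s_1,s_2]\times[t_1,t_2])=Q(s_1,t_1)+Q(s_2,t_2)-Q(s_2,t_1)-Q(s_1,t_2)$. Defects: for $\mathbf{x}\in[0,1]^2$ let $\mathcal{R}_\nearrow(\mathbf{x}),\mathcal{R}_\swarrow(\mathbf{x}),\mathcal{R}_\nwarrow(\mathbf{x}),\mathcal{R}_\searrow(\mathbf{x})$ be the sets of (possibly degenerate) rectangles in $[0,1]^2$ having $\mathbf{x}$ as southwest, northeast, southeast, northwest corner respectively; $D^Q_\bullet(\mathbf{x})=\inf\{V_Q(R):R\in\mathcal{R}_\bullet(\mathbf{x})\}$; $D^Q_M=\min(D^Q_\nearrow,D^Q_\swarrow)$, $D^Q_O=\min(D^Q_\nwarrow,D^Q_\searrow)$; $Q_M=Q-D^Q_M$ and $Q_O=Q+D^Q_O$. An imprecise copula is a pair $(A,B)$ of grounded functions with neutral element $1$ such that for every rectangle with southwest, southeast, northeast, northwest corners $\mathbf{a},\mathbf{b},\mathbf{c},\mathbf{d}$: $A(\mathbf{a})+B(\mathbf{c})-A(\mathbf{b})-A(\mathbf{d})\ge0$,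 $B(\mathbf{a})+A(\mathbf{c})-A(\mathbf{b})-A(\mathbf{d})\ge0$, $B(\mathbf{a})+B(\mathbf{c})-B(\mathbf{b})-A(\mathbf{d})\ge0$, $B(\mathbf{a})+B(\mathbf{c})-A(\mathbf{b})-B(\mathbf{d})\ge0$. (Discrete versions: same definitions with $[0,1]^2$ replaced by a mesh $\delta_x\times\delta_y$, all points and rectangle corners taken in the mesh.) *)

From Stdlib Require Import Reals List ClassicalEpsilon.
Open Scope R_scope.

Definition is_lower_bound (S : R -> Prop) (m : R) : Prop :=
  forall v, S v -> m <= v.
Definition is_glb (S : R -> Prop) (m : R) : Prop :=
  is_lower_bound S m /\ (forall m', is_lower_bound S m' -> m' <= m).

Definition Rinf (S : R -> Prop) : R :=
  epsilon (inhabits 0) (fun m => is_glb S m).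

Definition unit_int (x : R) : Prop := 0 <= x <= 1.

Definition is_mesh (D : R -> Prop) : Prop :=
  (exists l : list R, forall x, D x <-> In x l) /\ D 0 /\ D 1 /\
  (forall x, D x -> 0 <= x <= 1).

Definition V (Q : R -> R -> R) (s1 s2 t1 t2 : R) : R :=
  Q s1 t1 + Q s2 t2 - Q s2 t1 - Q s1 t2.

Definition grounded_neutral (Dx Dy : R -> Prop) (Q : R -> R -> R) : Prop :=
  (forall x, Dx x -> Q x 0 = 0) /\ (forall y, Dy y -> Q 0 y = 0) /\
  (forall x, Dx x -> Q x 1 = x) /\ (forall y, Dy y -> Q 1 y = y).

(* Quasi-copula on Dx x Dy (Dx = Dy = unit_int: the usual notion;
   meshes: discrete quasi-copula). *)
Definition quasi_copula (Dx Dy : R -> Prop) (Q : R -> R -> R) : Prop :=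
  grounded_neutral Dx Dy Q /\
  (forall s1 s2 t1 t2, Dx s1 -> Dx s2 -> Dy t1 -> Dy t2 ->
     s1 <= s2 -> t1 <= t2 -> (s1 = 0 \/ s2 = 1 \/ t1 = 0 \/ t2 = 1) ->
     0 <= V Q s1 s2 t1 t2).

Definition D_ne (Dx Dy : R -> Prop) (Q : R -> R -> R) (x y : R) : R :=
  Rinf (fun v => exists s t, Dx s /\ Dy t /\ x <= s /\ y <= t /\
                   v = V Q x s y t).
Definition D_sw (Dx Dy : R -> Prop) (Q : R -> R -> R) (x y : R) : R :=
  Rinf (fun v => exists s t, Dx s /\ Dy t /\ s <= x /\ t <= y /\
                   v = V Q s x t y).
Definition D_nw (Dx Dy : R -> Prop) (Q : R -> R -> R) (x y : R) : R :=
  Rinf (fun v => exists s t, Dx s /\ Dy t /\ s <= x /\ y <= t /\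
                   v = V Q s x y t).
Definition D_se (Dx Dy : R -> Prop) (Q : R -> R -> R) (x y : R) : R :=
  Rinf (fun v => exists s t, Dx s /\ Dy t /\ x <= s /\ t <= y /\
                   v = V Q x s t y).

Definition D_M Dx Dy Q x y : R := Rmin (D_ne Dx Dy Q x y) (D_sw Dx Dy Q x y).
Definition D_O Dx Dy Q x y : R := Rmin (D_nw Dx Dy Q x y) (D_se Dx Dy Q x y).

Definition Q_M Dx Dy Q : R -> R -> R := fun x y => Q x y - D_M Dx Dy Q x y.
Definition Q_O Dx Dy Q : R -> R -> R := fun x y => Q x y + D_O Dx Dy Q x y.

(* Imprecise copula (A,B) on Dx x Dy; rectangle [s1,s2]x[t1,t2] has
   a=(s1,t1) sw, b=(s2,t1) se, c=(s2,t2) ne, d=(s1,t2) nw. *)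
Definition imprecise_copula (Dx Dy : R -> Prop) (A B : R -> R -> R) : Prop :=
  grounded_neutral Dx Dy A /\ grounded_neutral Dx Dy B /\
  (forall s1 s2 t1 t2, Dx s1 -> Dx s2 -> Dy t1 -> Dy t2 ->
     s1 <= s2 -> t1 <= t2 ->
     0 <= A s1 t1 + B s2 t2 - A s2 t1 - A s1 t2 /\
     0 <= B s1 t1 + A s2 t2 - A s2 t1 - A s1 t2 /\
     0 <= B s1 t1 + B s2 t2 - B s2 t1 - A s1 t2 /\
     0 <= B s1 t1 + B s2 t2 - A s2 t1 - B s1 t2).

(* The argument works uniformly on any domain Dx x Dy where
   Dx, Dy contain 0 and 1 and lie in [0,1]; this covers both [0,1]^2 and
   meshes.

   1. Quasi-copula values lie in [0,1], so volumes are >= -2 and every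
      defect is a genuine infimum, characterised by "lower bound of the
      volumes of its rectangles" and "greatest such bound".
   2. A rectangle touching the boundary has a side on it, so defects
      vanish on the boundary and Q_M, Q_O are grounded with neutral 1.
   3. The four inequalities of an imprecise copula reduce, by additivity
      of volumes, either to a defect being below one volume, or to a
      superadditivity estimate D(a) + D(c) - V(R) <= D(b) obtained by
      tiling the rectangle of D(b) together with R by two rectangles
      cornered at a and c. *)

From Stdlib Require Import Reals Lra ClassicalEpsilon.
Open Scope R_scope.

(* A nonempty set of reals bounded below has Rinf as its greatest lower
   bound (completeness applied to the negated set). *)
Lemma Rinf_is_glb (S : R -> Prop) (L : R) :
  (exists v, S v) -> is_lower_bound S L -> is_glb S (Rinf S).
Proof.
  intros [v0 Hv0] HL. unfold Rinf. apply epsilon_spec.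
  set (E := fun u => S (- u)).
  assert (HE : forall v, S v -> E (- v)).
  { intros v Hv. unfold E. now rewrite Ropp_involutive. }
  destruct (completeness E) as [m [Hub Hleast]].
  - exists (- L). intros u Hu. apply HL in Hu. lra.
  - exists (- v0). now apply HE.
  - exists (- m). split.
    + intros v Hv. apply HE, Hub in Hv. lra.
    + intros m' Hm'.
      assert (Hup : is_upper_bound E (- m')).
      { intros u Hu. apply Hm' in Hu. lra. }
      apply Hleast in Hup. lra.
Qed.

(* All four defects are infima of this shape: values F s t over the
   points (s, t) of Dx x Dy on a prescribed side (Px, Py) of the corner. *)
Definition corner_values (Dx Dy Px Py : R -> Prop) (F : R -> R -> R) (v : R) : Prop :=
  exists s t, Dx s /\ Dy t /\ Px s /\ Py t /\ v = F s t.

Definition corner_inf (Dx Dy Px Py : R -> Prop) (F : R -> R -> R) : R :=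
  Rinf (corner_values Dx Dy Px Py F).

Section CornerInf.
Variables (Dx Dy Px Py : R -> Prop) (F : R -> R -> R).

Lemma corner_inf_le (L s t : R) :
  (forall s' t', Dx s' -> Dy t' -> Px s' -> Py t' -> L <= F s' t') ->
  Dx s -> Dy t -> Px s -> Py t -> corner_inf Dx Dy Px Py F <= F s t.
Proof.
  intros HL Hs Ht Hps Hpt.
  destruct (Rinf_is_glb (corner_values Dx Dy Px Py F) L) as [Hlb _].
  - exists (F s t), s, t. auto.
  - intros v (s' & t' & ? & ? & ? & ? & ->). auto.
  - apply Hlb. exists s, t. auto.
Qed.

Lemma corner_inf_greatest (m s0 t0 : R) :
  Dx s0 -> Dy t0 -> Px s0 -> Py t0 ->
  (forall s t, Dx s -> Dy t -> Px s -> Py t -> m <= F s t) ->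
  m <= corner_inf Dx Dy Px Py F.
Proof.
  intros Hs0 Ht0 Hps0 Hpt0 Hm.
  assert (Hlb : is_lower_bound (corner_values Dx Dy Px Py F) m).
  { intros v (s & t & ? & ? & ? & ? & ->). auto. }
  destruct (Rinf_is_glb (corner_values Dx Dy Px Py F) m) as [_ Hgreatest]; auto.
  exists (F s0 t0), s0, t0. auto.
Qed.

End CornerInf.

Definition grid (D : R -> Prop) : Prop :=
  D 0 /\ D 1 /\ (forall x, D x -> 0 <= x <= 1).

Definition on_edge (x : R) : Prop := x = 0 \/ x = 1.

Section Defects.
Variables (Dx Dy : R -> Prop) (Q : R -> R -> R).
Hypothesis gridx : grid Dx.
Hypothesis gridy : grid Dy.
Hypothesis HQ : quasi_copula Dx Dy Q.

(* Values lie in [0,1]: in fact 0 <= Q x y <= x, by the boundary rectangles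
   [0,x]x[0,y] and [0,x]x[y,1]. *)
Lemma quasi_copula_range (x y : R) : Dx x -> Dy y -> 0 <= Q x y <= 1.
Proof.
  intros Hx Hy.
  destruct HQ as [[Qx0 [Q0y [Qx1 _]]] Hvol].
  destruct gridx as [x0 [x1 bx]]. destruct gridy as [y0 [y1 bY]].
  pose proof (bx x Hx). pose proof (bY y Hy).
  pose proof (Hvol 0 x 0 y x0 Hx y0 Hy ltac:(lra) ltac:(lra) ltac:(now left)).
  pose proof (Hvol 0 x y 1 x0 Hx Hy y1 ltac:(lra) ltac:(lra) ltac:(now left)).
  pose proof (Qx0 0 x0). pose proof (Qx0 x Hx).
  pose proof (Q0y y Hy). pose proof (Q0y 1 y1). pose proof (Qx1 x Hx).
  unfold V in *. lra.
Qed.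

Lemma volume_lower_bound (s1 s2 t1 t2 : R) :
  Dx s1 -> Dx s2 -> Dy t1 -> Dy t2 -> -2 <= V Q s1 s2 t1 t2.
Proof.
  intros. pose proof (quasi_copula_range s1 t1). pose proof (quasi_copula_range s1 t2).
  pose proof (quasi_copula_range s2 t1). pose proof (quasi_copula_range s2 t2).
  unfold V. intuition lra.
Qed.

(* A rectangle with a corner on the boundary of the square has a side on
   it, hence nonnegative volume. *)
Lemma volume_nonneg_on_edge (s1 s2 t1 t2 : R) :
  Dx s1 -> Dx s2 -> Dy t1 -> Dy t2 -> s1 <= s2 -> t1 <= t2 ->
  on_edge s1 \/ on_edge s2 \/ on_edge t1 \/ on_edge t2 -> 0 <= V Q s1 s2 t1 t2.
Proof.
  intros Hs1 Hs2 Ht1 Ht2 Hs Ht Hedge.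
  destruct HQ as [_ Hvol]. destruct gridx as [_ [_ bx]]. destruct gridy as [_ [_ bY]].
  pose proof (bx s1 Hs1). pose proof (bx s2 Hs2).
  pose proof (bY t1 Ht1). pose proof (bY t2 Ht2).
  apply Hvol; auto. unfold on_edge in Hedge.
  destruct Hedge as [[E | E] | [[E | E] | [[E | E] | [E | E]]]];
    first [left; lra | right; left; lra | right; right; left; lra | right; right; right; lra].
Qed.

Lemma D_M_le_ne (x y s t : R) : Dx x -> Dy y -> Dx s -> Dy t -> x <= s -> y <= t ->
  D_M Dx Dy Q x y <= V Q x s y t.
Proof.
  intros. eapply Rle_trans; [apply Rmin_l |].
  apply (corner_inf_le Dx Dy (Rle x) (Rle y) (fun s t => V Q x s y t) (-2));
    auto using volume_lower_bound.
Qed.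

Lemma D_M_le_sw (x y s t : R) : Dx x -> Dy y -> Dx s -> Dy t -> s <= x -> t <= y ->
  D_M Dx Dy Q x y <= V Q s x t y.
Proof.
  intros. eapply Rle_trans; [apply Rmin_r |].
  apply (corner_inf_le Dx Dy (fun s => s <= x) (fun t => t <= y)
           (fun s t => V Q s x t y) (-2)); auto using volume_lower_bound.
Qed.

Lemma D_M_greatest (x y m : R) : Dx x -> Dy y ->
  (forall s t, Dx s -> Dy t -> x <= s -> y <= t -> m <= V Q x s y t) ->
  (forall s t, Dx s -> Dy t -> s <= x -> t <= y -> m <= V Q s x t y) ->
  m <= D_M Dx Dy Q x y.
Proof.
  intros Hx Hy Hne Hsw. apply Rmin_glb.
  - apply (corner_inf_greatest Dx Dy (Rle x) (Rle y) (fun s t => V Q x s y t) m x y);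
      auto; lra.
  - apply (corner_inf_greatest Dx Dy (fun s => s <= x) (fun t => t <= y)
             (fun s t => V Q s x t y) m x y); auto; lra.
Qed.

Lemma D_O_le_nw (x y s t : R) : Dx x -> Dy y -> Dx s -> Dy t -> s <= x -> y <= t ->
  D_O Dx Dy Q x y <= V Q s x y t.
Proof.
  intros. eapply Rle_trans; [apply Rmin_l |].
  apply (corner_inf_le Dx Dy (fun s => s <= x) (Rle y) (fun s t => V Q s x y t) (-2));
    auto using volume_lower_bound.
Qed.

Lemma D_O_le_se (x y s t : R) : Dx x -> Dy y -> Dx s -> Dy t -> x <= s -> t <= y ->
  D_O Dx Dy Q x y <= V Q x s t y.
Proof.
  intros. eapply Rle_trans; [apply Rmin_r |].
  apply (corner_inf_le Dx Dy (Rle x) (fun t => t <= y) (fun s t => V Q x s t y) (-2));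
    auto using volume_lower_bound.
Qed.

Lemma D_O_greatest (x y m : R) : Dx x -> Dy y ->
  (forall s t, Dx s -> Dy t -> s <= x -> y <= t -> m <= V Q s x y t) ->
  (forall s t, Dx s -> Dy t -> x <= s -> t <= y -> m <= V Q x s t y) ->
  m <= D_O Dx Dy Q x y.
Proof.
  intros Hx Hy Hnw Hse. apply Rmin_glb.
  - apply (corner_inf_greatest Dx Dy (fun s => s <= x) (Rle y)
             (fun s t => V Q s x y t) m x y); auto; lra.
  - apply (corner_inf_greatest Dx Dy (Rle x) (fun t => t <= y)
             (fun s t => V Q x s t y) m x y); auto; lra.
Qed.

(* Defects vanish on the boundary: the degenerate rectangle gives <= 0
   and every rectangle cornered there has nonnegative volume. *)
Lemma D_M_on_edge (x y : R) : Dx x -> Dy y -> on_edge x \/ on_edge y ->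
  D_M Dx Dy Q x y = 0.
Proof.
  intros Hx Hy Hedge. apply Rle_antisym.
  - pose proof (D_M_le_ne x y x y Hx Hy Hx Hy (Rle_refl x) (Rle_refl y)).
    unfold V in *. lra.
  - apply D_M_greatest; auto; intros s t Hs Ht Hxs Hyt;
      apply volume_nonneg_on_edge; tauto.
Qed.

Lemma D_O_on_edge (x y : R) : Dx x -> Dy y -> on_edge x \/ on_edge y ->
  D_O Dx Dy Q x y = 0.
Proof.
  intros Hx Hy Hedge. apply Rle_antisym.
  - pose proof (D_O_le_nw x y x y Hx Hy Hx Hy (Rle_refl x) (Rle_refl y)).
    unfold V in *. lra.
  - apply D_O_greatest; auto; intros s t Hs Ht Hxs Hyt;
      apply volume_nonneg_on_edge; tauto.
Qed.

(* Superadditivity of D_M along the diagonal (s1,t1)-(s2,t2): every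
   rectangle cornered at the southeast point (s2,t1), united with
   [s1,s2]x[t1,t2], splits into a rectangle cornered at (s1,t1) and one
   cornered at (s2,t2). *)
Lemma D_M_superadditive_se (s1 s2 t1 t2 : R) :
  Dx s1 -> Dx s2 -> Dy t1 -> Dy t2 -> s1 <= s2 -> t1 <= t2 ->
  D_M Dx Dy Q s1 t1 + D_M Dx Dy Q s2 t2 - V Q s1 s2 t1 t2 <= D_M Dx Dy Q s2 t1.
Proof.
  intros Hs1 Hs2 Ht1 Ht2 Hs Ht. apply D_M_greatest; auto.
  - intros s t Hs' Ht' H1 H2. destruct (Rle_dec t t2).
    + pose proof (D_M_le_ne s1 t1 s t Hs1 Ht1 Hs' Ht' ltac:(lra) ltac:(lra)).
      pose proof (D_M_le_sw s2 t2 s1 t Hs2 Ht2 Hs1 Ht' ltac:(lra) ltac:(lra)).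
      unfold V in *. lra.
    + pose proof (D_M_le_ne s1 t1 s t2 Hs1 Ht1 Hs' Ht2 ltac:(lra) ltac:(lra)).
      pose proof (D_M_le_ne s2 t2 s t Hs2 Ht2 Hs' Ht' ltac:(lra) ltac:(lra)).
      unfold V in *. lra.
  - intros s t Hs' Ht' H1 H2. destruct (Rle_dec s s1).
    + pose proof (D_M_le_sw s2 t2 s1 t Hs2 Ht2 Hs1 Ht' ltac:(lra) ltac:(lra)).
      pose proof (D_M_le_sw s1 t1 s t Hs1 Ht1 Hs' Ht' ltac:(lra) ltac:(lra)).
      unfold V in *. lra.
    + pose proof (D_M_le_sw s2 t2 s t Hs2 Ht2 Hs' Ht' ltac:(lra) ltac:(lra)).
      pose proof (D_M_le_ne s1 t1 s t2 Hs1 Ht1 Hs' Ht2 ltac:(lra) ltac:(lra)).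
      unfold V in *. lra.
Qed.

Lemma D_M_superadditive_nw (s1 s2 t1 t2 : R) :
  Dx s1 -> Dx s2 -> Dy t1 -> Dy t2 -> s1 <= s2 -> t1 <= t2 ->
  D_M Dx Dy Q s1 t1 + D_M Dx Dy Q s2 t2 - V Q s1 s2 t1 t2 <= D_M Dx Dy Q s1 t2.
Proof.
  intros Hs1 Hs2 Ht1 Ht2 Hs Ht. apply D_M_greatest; auto.
  - intros s t Hs' Ht' H1 H2. destruct (Rle_dec s s2).
    + pose proof (D_M_le_ne s1 t1 s t Hs1 Ht1 Hs' Ht' ltac:(lra) ltac:(lra)).
      pose proof (D_M_le_sw s2 t2 s t1 Hs2 Ht2 Hs' Ht1 ltac:(lra) ltac:(lra)).
      unfold V in *. lra.
    + pose proof (D_M_le_ne s1 t1 s2 t Hs1 Ht1 Hs2 Ht' ltac:(lra) ltac:(lra)).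
      pose proof (D_M_le_ne s2 t2 s t Hs2 Ht2 Hs' Ht' ltac:(lra) ltac:(lra)).
      unfold V in *. lra.
  - intros s t Hs' Ht' H1 H2. destruct (Rle_dec t t1).
    + pose proof (D_M_le_sw s1 t1 s t Hs1 Ht1 Hs' Ht' ltac:(lra) ltac:(lra)).
      pose proof (D_M_le_sw s2 t2 s t1 Hs2 Ht2 Hs' Ht1 ltac:(lra) ltac:(lra)).
      unfold V in *. lra.
    + pose proof (D_M_le_sw s2 t2 s t Hs2 Ht2 Hs' Ht' ltac:(lra) ltac:(lra)).
      pose proof (D_M_le_ne s1 t1 s2 t Hs1 Ht1 Hs2 Ht' ltac:(lra) ltac:(lra)).
      unfold V in *. lra.
Qed.

Lemma D_O_superadditive_sw (s1 s2 t1 t2 : R) :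
  Dx s1 -> Dx s2 -> Dy t1 -> Dy t2 -> s1 <= s2 -> t1 <= t2 ->
  D_O Dx Dy Q s2 t1 + D_O Dx Dy Q s1 t2 - V Q s1 s2 t1 t2 <= D_O Dx Dy Q s1 t1.
Proof.
  intros Hs1 Hs2 Ht1 Ht2 Hs Ht. apply D_O_greatest; auto.
  - intros s t Hs' Ht' H1 H2. destruct (Rle_dec t t2).
    + pose proof (D_O_le_nw s2 t1 s t Hs2 Ht1 Hs' Ht' ltac:(lra) ltac:(lra)).
      pose proof (D_O_le_se s1 t2 s2 t Hs1 Ht2 Hs2 Ht' ltac:(lra) ltac:(lra)).
      unfold V in *. lra.
    + pose proof (D_O_le_nw s1 t2 s t Hs1 Ht2 Hs' Ht' ltac:(lra) ltac:(lra)).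
      pose proof (D_O_le_nw s2 t1 s t2 Hs2 Ht1 Hs' Ht2 ltac:(lra) ltac:(lra)).
      unfold V in *. lra.
  - intros s t Hs' Ht' H1 H2. destruct (Rle_dec s s2).
    + pose proof (D_O_le_se s1 t2 s t Hs1 Ht2 Hs' Ht' ltac:(lra) ltac:(lra)).
      pose proof (D_O_le_nw s2 t1 s t2 Hs2 Ht1 Hs' Ht2 ltac:(lra) ltac:(lra)).
      unfold V in *. lra.
    + pose proof (D_O_le_se s1 t2 s2 t Hs1 Ht2 Hs2 Ht' ltac:(lra) ltac:(lra)).
      pose proof (D_O_le_se s2 t1 s t Hs2 Ht1 Hs' Ht' ltac:(lra) ltac:(lra)).
      unfold V in *. lra.
Qed.

Lemma D_O_superadditive_ne (s1 s2 t1 t2 : R) :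
  Dx s1 -> Dx s2 -> Dy t1 -> Dy t2 -> s1 <= s2 -> t1 <= t2 ->
  D_O Dx Dy Q s2 t1 + D_O Dx Dy Q s1 t2 - V Q s1 s2 t1 t2 <= D_O Dx Dy Q s2 t2.
Proof.
  intros Hs1 Hs2 Ht1 Ht2 Hs Ht. apply D_O_greatest; auto.
  - intros s t Hs' Ht' H1 H2. destruct (Rle_dec s s1).
    + pose proof (D_O_le_nw s1 t2 s t Hs1 Ht2 Hs' Ht' ltac:(lra) ltac:(lra)).
      pose proof (D_O_le_nw s2 t1 s1 t Hs2 Ht1 Hs1 Ht' ltac:(lra) ltac:(lra)).
      unfold V in *. lra.
    + pose proof (D_O_le_nw s2 t1 s t Hs2 Ht1 Hs' Ht' ltac:(lra) ltac:(lra)).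
      pose proof (D_O_le_se s1 t2 s t1 Hs1 Ht2 Hs' Ht1 ltac:(lra) ltac:(lra)).
      unfold V in *. lra.
  - intros s t Hs' Ht' H1 H2. destruct (Rle_dec t t1).
    + pose proof (D_O_le_se s1 t2 s t1 Hs1 Ht2 Hs' Ht1 ltac:(lra) ltac:(lra)).
      pose proof (D_O_le_se s2 t1 s t Hs2 Ht1 Hs' Ht' ltac:(lra) ltac:(lra)).
      unfold V in *. lra.
    + pose proof (D_O_le_se s1 t2 s t Hs1 Ht2 Hs' Ht' ltac:(lra) ltac:(lra)).
      pose proof (D_O_le_nw s2 t1 s1 t Hs2 Ht1 Hs1 Ht' ltac:(lra) ltac:(lra)).
      unfold V in *. lra.
Qed.

End Defects.

Lemma grounded_neutral_boundary (Dx Dy : R -> Prop) (Q Q' : R -> R -> R) :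
  grid Dx -> grid Dy -> grounded_neutral Dx Dy Q ->
  (forall x y, Dx x -> Dy y -> on_edge x \/ on_edge y -> Q' x y = Q x y) ->
  grounded_neutral Dx Dy Q'.
Proof.
  intros [x0 [x1 _]] [y0 [y1 _]] [Qx0 [Q0y [Qx1 Q1y]]] Hagree.
  unfold on_edge in Hagree.
  repeat split; intros z Hz; rewrite Hagree; auto.
Qed.

Lemma lower_envelope_imprecise (Dx Dy : R -> Prop) (Q : R -> R -> R) :
  grid Dx -> grid Dy -> quasi_copula Dx Dy Q ->
  imprecise_copula Dx Dy Q (Q_M Dx Dy Q).
Proof.
  intros gx gy HQ. pose proof HQ as [Hgn _].
  split; [exact Hgn |]. split.
  { apply (grounded_neutral_boundary Dx Dy Q); auto.
    intros x y Hx Hy Hedge. unfold Q_M. rewrite D_M_on_edge; auto. lra. }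
  intros s1 s2 t1 t2 Hs1 Hs2 Ht1 Ht2 Hs Ht. unfold Q_M.
  pose proof (D_M_le_ne Dx Dy Q gx gy HQ s1 t1 s2 t2 Hs1 Ht1 Hs2 Ht2 Hs Ht).
  pose proof (D_M_le_sw Dx Dy Q gx gy HQ s2 t2 s1 t1 Hs2 Ht2 Hs1 Ht1 Hs Ht).
  pose proof (D_M_superadditive_se Dx Dy Q gx gy HQ s1 s2 t1 t2 Hs1 Hs2 Ht1 Ht2 Hs Ht).
  pose proof (D_M_superadditive_nw Dx Dy Q gx gy HQ s1 s2 t1 t2 Hs1 Hs2 Ht1 Ht2 Hs Ht).
  unfold V in *. repeat split; lra.
Qed.

Lemma upper_envelope_imprecise (Dx Dy : R -> Prop) (Q : R -> R -> R) :
  grid Dx -> grid Dy -> quasi_copula Dx Dy Q ->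
  imprecise_copula Dx Dy (Q_O Dx Dy Q) Q.
Proof.
  intros gx gy HQ. pose proof HQ as [Hgn _].
  split.
  { apply (grounded_neutral_boundary Dx Dy Q); auto.
    intros x y Hx Hy Hedge. unfold Q_O. rewrite D_O_on_edge; auto. lra. }
  split; [exact Hgn |].
  intros s1 s2 t1 t2 Hs1 Hs2 Ht1 Ht2 Hs Ht. unfold Q_O.
  pose proof (D_O_le_nw Dx Dy Q gx gy HQ s2 t1 s1 t2 Hs2 Ht1 Hs1 Ht2 Hs Ht).
  pose proof (D_O_le_se Dx Dy Q gx gy HQ s1 t2 s2 t1 Hs1 Ht2 Hs2 Ht1 Hs Ht).
  pose proof (D_O_superadditive_sw Dx Dy Q gx gy HQ s1 s2 t1 t2 Hs1 Hs2 Ht1 Ht2 Hs Ht).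
  pose proof (D_O_superadditive_ne Dx Dy Q gx gy HQ s1 s2 t1 t2 Hs1 Hs2 Ht1 Ht2 Hs Ht).
  unfold V in *. repeat split; lra.
Qed.

Lemma grid_unit_int : grid unit_int.
Proof. unfold grid, unit_int. repeat split; intros; lra. Qed.

Lemma grid_mesh (D : R -> Prop) : is_mesh D -> grid D.
Proof. intros [_ Hgrid]. exact Hgrid. Qed.

Theorem mainTheorem7 :
  (forall A B : R -> R -> R,
     quasi_copula unit_int unit_int A -> quasi_copula unit_int unit_int B ->
     imprecise_copula unit_int unit_int A (Q_M unit_int unit_int A) /\
     imprecise_copula unit_int unit_int (Q_O unit_int unit_int B) B) /\
  (forall (Dx Dy : R -> Prop), is_mesh Dx -> is_mesh Dy ->
   forall A B : R -> R -> R,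
     quasi_copula Dx Dy A -> quasi_copula Dx Dy B ->
     imprecise_copula Dx Dy A (Q_M Dx Dy A) /\
     imprecise_copula Dx Dy (Q_O Dx Dy B) B).
Proof.
  pose proof grid_unit_int as gu. split.
  - intros A B HA HB.
    split; [apply lower_envelope_imprecise | apply upper_envelope_imprecise]; auto.
  - intros Dx Dy Hmx Hmy A B HA HB.
    apply grid_mesh in Hmx. apply grid_mesh in Hmy.
    split; [apply lower_envelope_imprecise | apply upper_envelope_imprecise]; auto.
Qed.
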